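(* Let $\Gamma$ be the semigroup associated to an irreducible plane curve singularity, minimally generated by $r_0<\cdots<r_h$, with conductor $c$. If $h\ge 2$, then $h\le \log_2\!\left(\frac{\sqrt{60c+1}+9}{10}\right)$.
   Context: A numerical semigroup is a submonoid of $(\mathbb N,+)$ with finite complement in $\mathbb N$; it has a unique minimal generating system. The conductor is $c=\mathrm F(\Gamma)+1$, where $\mathrm F(\Gamma)$ is the largest integer not in $\Gamma$. $\langle X\rangle$ is the submonoid generated by $X$. For an arrangement $(r_0,\ldots,r_h)$ of the minimal generators, set $d_k=\gcd(r_0,\ldots,r_{k-1})$ and $e_k=d_k/d_{k+1}$. A set $A$ of positive integers with nontrivial partition $A=A_1\cup A_2$ is the gluing of $A_1$ and $A_2$ if $\mathrm{lcm}(\gcd A_1,\gcd A_2)\in\langle A_1\rangle\cap\langle A_2\rangle$. $\Gamma$ is free for $(r_0,\ldots,r_h)$ if $h=0$, or $h\ge1$, $\{r_0,\ldots,r_h\}$ is the gluing of $\{r_0,\ldots,r_{h-1}\}$ and $\{r_h\}$, and $\langle r_0/d_h,\ldots,r_{h-1}/d_h\rangle$ is free for $(r_0/d_h,\ldots,r_{h-1}/d_h)$. $\Gamma$ is telescopic if it is free for the increasing arrangement $r_0<\cdots<r_h$. $\Gamma$ is the semigroup associated to an irreducible plane curve singularity if it is telescopic and $e_kr_k<r_{k+1}$ for all $k=1,\ldots,h-1$. *)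

From mathcomp Require Import all_boot.
From Stdlib Require Import Reals.

Set Implicit Arguments.
Unset Strict Implicit.
Unset Printing Implicit Defensive.

Inductive gen (X : seq nat) : nat -> Prop :=
| gen0 : gen X 0
| genS x n : x \in X -> gen X n -> gen X (x + n).

Definition numerical_semigroup (G : nat -> Prop) : Prop :=
  [/\ G 0, (forall m n, G m -> G n -> G (m + n))
    & exists N, forall n, N <= n -> G n].

Definition minimal_generating_system (G : nat -> Prop) (r : seq nat) : Prop :=
  [/\ forall n, G n <-> gen r n,
      uniq r,
      all (fun x => 0 < x) r
    & forall x, x \in r -> ~ gen (rem x r) x].

Definition is_conductor (G : nat -> Prop) (c : nat) : Prop :=
  (forall n, c <= n -> G n) /\
  (forall c', (forall n, c' <= n -> G n) -> c <= c').

Definition gcd_seq (s : seq nat) : nat := foldr gcdn 0 s.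

Definition gluing (A1 A2 : seq nat) : Prop :=
  [/\ A1 != [::], A2 != [::], [predI A1 & A2] =1 pred0
    & gen A1 (lcmn (gcd_seq A1) (gcd_seq A2)) /\
      gen A2 (lcmn (gcd_seq A1) (gcd_seq A2))].

(* Recursive definition as in the paper: h = 0, or
   {r_0..r_h} is the gluing of {r_0..r_(h-1)} and {r_h}, and
   <r_0/d_h, ..., r_(h-1)/d_h> is free for (r_0/d_h, ..., r_(h-1)/d_h). *)
Inductive free : seq nat -> Prop :=
| free0 x : free [:: x]
| freeS s x : gluing s [:: x] ->
    free (map (fun y => y %/ gcd_seq s) s) -> free (rcons s x).

Definition dk (r : seq nat) (k : nat) : nat := gcd_seq (take k r).
Definition ek (r : seq nat) (k : nat) : nat := dk r k %/ dk r k.+1.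

Definition telescopic (r : seq nat) : Prop := sorted ltn r /\ free r.

(* semigroup of an irreducible plane curve singularity, in terms of its
   increasingly listed minimal generators r = (r_0, ..., r_h) *)
Definition plane_curve_gens (r : seq nat) : Prop :=
  telescopic r /\
  (forall k, 1 <= k -> k <= (size r).-1 - 1 ->
     ek r k * nth 0 r k < nth 0 r k.+1).

From mathcomp Require Import all_boot zify.
From Stdlib Require Import Reals Lra.

(* Let d_k = gcd(r_0, ..., r_(k-1)) and e_k = d_k / d_(k+1).  Freeness puts
   e_k r_k in <r_0, ..., r_(k-1)>.  Hence if n + r_0 = sum_(i >= 1) b_i r_i
   with n in Gamma and 0 <= b_i < e_i, the coefficient of r_h in n can be
   reduced below e_h, and comparing both sides modulo d_h forces it to be b_h;
   descending through h - 1, ..., 1 leaves n + r_0 = 0, which is absurd.  With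
   b_i = e_i - 1 this gives sum_(i >= 1) (e_i - 1) r_i < c + r_0.
   Minimality of the generators gives e_k >= 2, and then the plane curve
   condition e_k r_k < r_(k+1) makes r_k grow like 4^k d_(k+1); by induction
   5 4^h + 4 <= 3 c + 9 2^h, which, solved as a quadratic inequality in 2^h,
   is the logarithmic bound. *)

Set Implicit Arguments.
Unset Strict Implicit.
Unset Printing Implicit Defensive.

(* [Reals] rebinds [^] on [nat] to [Nat.pow]; restore [expn]. *)
Local Notation "m ^ n" := (expn m n) : nat_scope.

Lemma gen_add X a b : gen X a -> gen X b -> gen X (a + b).
Proof. by elim=> [//|x m Xx _ IH] Xb; rewrite -addnA; apply: genS => //; apply: IH. Qed.

Lemma gen_muln X q a : gen X a -> gen X (q * a).
Proof. by move=> Xa; elim: q => [|q IH]; [exact: gen0 | rewrite mulSn; exact: gen_add]. Qed.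

Lemma sub_gen X Y n : {subset X <= Y} -> gen X n -> gen Y n.
Proof. by move=> sXY; elim=> [|x m Xx _ IH]; [exact: gen0 | apply: genS; [apply: sXY|]]. Qed.

Lemma gen_rcons X y n : gen (rcons X y) n -> exists m mu, gen X m /\ n = m + mu * y.
Proof.
elim=> [|x m + _ [m' [mu [Xm' ->]]]]; first by exists 0, 0; split=> //; apply: gen0.
rewrite mem_rcons in_cons => /predU1P [->|Xx].
  by exists m', mu.+1; split=> //; rewrite mulSn addnCA.
by exists (x + m'), mu; split; [apply: genS | rewrite addnA].
Qed.

Lemma gen_map_muln X d n : gen X n -> gen (map (muln d) X) (d * n).
Proof.
elim=> [|x m Xx _ IH]; first by rewrite muln0; apply: gen0.
by rewrite mulnDr; apply: genS => //; apply: map_f.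
Qed.

Lemma gcd_seq_rcons s x : gcd_seq (rcons s x) = gcdn (gcd_seq s) x.
Proof. by elim: s => [|a s IH] /=; rewrite ?gcd0n ?gcdn0 // IH gcdnA. Qed.

Lemma gcd_seq_dvd s x : x \in s -> gcd_seq s %| x.
Proof.
elim: s => [//|a s IH] /=; rewrite in_cons => /predU1P [->|sx].
  exact: dvdn_gcdl.
exact: dvdn_trans (dvdn_gcdr _ _) (IH sx).
Qed.

Lemma dvdn_gcd_seq d s : {in s, forall y, d %| y} -> d %| gcd_seq s.
Proof.
elim: s => [|a s IH] ds /=; first exact: dvdn0.
by rewrite dvdn_gcd ds ?mem_head // IH // => y sy; apply: ds; rewrite in_cons sy orbT.
Qed.

Lemma gcd_seq_gt0 s : s != [::] -> all (fun x => 0 < x) s -> 0 < gcd_seq s.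
Proof. by case: s => [//|a s] _ /= /andP [a_gt0 _]; rewrite gcdn_gt0 a_gt0. Qed.

Lemma gen_gcd_seq_dvd X n : gen X n -> gcd_seq X %| n.
Proof. by elim=> [|x m Xx _ IH]; rewrite ?dvdn0 // dvdn_add // gcd_seq_dvd. Qed.

Lemma gcd_seq_map_divn d s : 0 < d -> {in s, forall y, d %| y} ->
  gcd_seq (map (divn^~ d) s) = gcd_seq s %/ d.
Proof.
move=> d_gt0; elim: s => [|a s IH] ds /=; first by rewrite div0n.
have ds' : {in s, forall y, d %| y} by move=> y sy; apply: ds; rewrite in_cons sy orbT.
rewrite IH //; apply/eqP; rewrite -(eqn_pmul2r d_gt0) muln_gcdl !divnK ?dvdn_gcd_seq //.
- by rewrite dvdn_gcd ds ?mem_head // dvdn_gcd_seq.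
- by apply: ds; rewrite mem_head.
Qed.

Lemma free_lcm_gen r : free r -> all (fun x => 0 < x) r -> forall k, k < size r ->
  gen (take k r) (lcmn (dk r k) (nth 0 r k)).
Proof.
elim=> [x|s x [s_nil _ _ [glue _]] _ IH] s_gt0 k.
  by case: k => // _; rewrite /= lcm0n; apply: gen0.
rewrite -cats1 all_cat /= andbT in s_gt0; case/andP: s_gt0 => s_gt0 _.
set d := gcd_seq s.
have d_dvd : {in s, forall y, d %| y} by move=> y; apply: gcd_seq_dvd.
have d_gt0 : 0 < d by apply: gcd_seq_gt0.
rewrite -cats1 size_cat addn1 ltnS leq_eqVlt => /predU1P [->|lt_ks].
  by move: glue; rewrite /dk take_size_cat // nth_cat ltnn subnn /= gcdn0.
rewrite /dk takel_cat ?(ltnW lt_ks) // nth_cat lt_ks.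
have d_dvd_take : {in take k s, forall y, d %| y} by move=> y /mem_take; apply: d_dvd.
have sd_gt0 : all (fun x => 0 < x) (map (divn^~ d) s).
  rewrite all_map; apply/allP => y sy /=.
  by rewrite divn_gt0 // dvdn_leq ?(allP s_gt0 y sy) ?d_dvd.
have := IH sd_gt0 k; rewrite size_map => /(_ lt_ks) /(gen_map_muln d).
rewrite /dk -map_take (nth_map 0) // gcd_seq_map_divn // -map_comp map_id_in; last first.
  by move=> y sy /=; rewrite mulnC divnK ?d_dvd_take.
rewrite muln_lcmr ![d * _]mulnC !divnK //; last exact: dvdn_gcd_seq d_dvd_take.
by apply: d_dvd; apply: mem_nth.
Qed.

Lemma dvdn_mulr_divgcd D R x : 0 < R -> (D %| x * R) = (D %/ gcdn D R %| x).
Proof.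
move=> R_gt0; rewrite -[RHS](dvdn_pmul2r R_gt0) (divn_mulAC _ (dvdn_gcdl D R)).
by rewrite -/(lcmn D R) dvdn_lcm (dvdn_mull _ (dvdnn R)) andbT.
Qed.

Lemma eq_digits_mod D R A B s b : 0 < R -> D %| A -> D %| B ->
  s < D %/ gcdn D R -> b < D %/ gcdn D R -> A + s * R = B + b * R -> s = b.
Proof.
move=> R_gt0; wlog le_sb : s b A B / s <= b => [hwlog|] dA dB s_lt b_lt eqAB.
  case: (leqP s b) => [|/ltnW] ?; first exact: (hwlog s b A B).
  by apply/esym/(hwlog b s B A).
have dBA : D %| (b - s) * R by rewrite mulnBl (_ : b * R - s * R = A - B) ?dvdn_sub //; lia.
move: dBA; rewrite dvdn_mulr_divgcd // => /dvdn_leq; lia.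
Qed.

Section Telescopic.

Variable r : seq nat.
Hypothesis r_gt0 : all (fun x => 0 < x) r.
Hypothesis size_r_gt0 : 0 < size r.
Hypothesis lcm_gen : forall k, k < size r -> gen (take k r) (lcmn (dk r k) (nth 0 r k)).

Lemma nth_gt0 k : k < size r -> 0 < nth 0 r k.
Proof. by move=> lt_kr; apply: (allP r_gt0); apply: mem_nth. Qed.

Lemma dkS k : k < size r -> dk r k.+1 = gcdn (dk r k) (nth 0 r k).
Proof. by move=> lt_kr; rewrite /dk (take_nth 0 lt_kr) gcd_seq_rcons. Qed.

Lemma dk1 : dk r 1 = nth 0 r 0.
Proof. by rewrite dkS // /dk take0 gcd0n. Qed.

Lemma dk_gt0 k : 0 < k -> 0 < dk r k.
Proof.
move=> k_gt0; apply: gcd_seq_gt0; last by apply/allP => y /mem_take; apply/allP.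
by rewrite -size_eq0 size_take_min -lt0n leq_min k_gt0.
Qed.

Lemma dk_dvd k i : i < k -> i < size r -> dk r k %| nth 0 r i.
Proof.
move=> lt_ik lt_ir; apply: gcd_seq_dvd; rewrite -(nth_take 0 lt_ik).
by apply: mem_nth; rewrite size_take_min leq_min lt_ik.
Qed.

Lemma ek_dk k : k < size r -> ek r k = dk r k %/ gcdn (dk r k) (nth 0 r k).
Proof. by move=> lt_kr; rewrite /ek dkS. Qed.

Lemma ek_mul_dk k : k < size r -> ek r k * dk r k.+1 = dk r k.
Proof. by move=> lt_kr; rewrite /ek divnK // dkS // dvdn_gcdl. Qed.

Lemma ek_gt0 k : 0 < k < size r -> 0 < ek r k.
Proof.
case/andP=> k_gt0 lt_kr; have := dk_gt0 k_gt0.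
by rewrite -(ek_mul_dk lt_kr) muln_gt0 => /andP [].
Qed.

Lemma gen_ek_mul k : k < size r -> gen (take k r) (ek r k * nth 0 r k).
Proof.
move=> lt_kr; rewrite ek_dk // (divn_mulAC _ (dvdn_gcdl _ _)); exact: lcm_gen.
Qed.

Lemma ek_gt1 k : uniq r -> (forall x, x \in r -> ~ gen (rem x r) x) ->
  0 < k < size r -> 1 < ek r k.
Proof.
move=> r_uniq r_min /andP [k_gt0 lt_kr].
rewrite ltn_neqAle ek_gt0 ?k_gt0 // andbT; apply/eqP => e1.
apply: (r_min _ (mem_nth 0 lt_kr)).
have := gen_ek_mul lt_kr; rewrite -e1 mul1n; apply: sub_gen => y y_take.
apply: rem_mem (mem_take y_take); apply: contraTneq y_take => ->.
by rewrite in_take ?mem_nth // index_uniq // ltnn.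
Qed.

Lemma gen_add_head_neq_digits j n (b : nat -> nat) : j < size r ->
  gen (take j.+1 r) n -> (forall i, 0 < i <= j -> b i < ek r i) ->
  n + nth 0 r 0 != \sum_(1 <= i < j.+1) b i * nth 0 r i.
Proof.
elim: j n => [|j IH] n lt_jr gen_n b_lt.
  by rewrite big_geq // -lt0n addn_gt0 nth_gt0 ?orbT.
set R := nth 0 r j.+1; set e := ek r j.+1; set T := \sum_(1 <= i < j.+1) b i * nth 0 r i.
rewrite big_nat_recr //= -/T -/R.
move: gen_n; rewrite (take_nth 0 lt_jr) => /gen_rcons [m [mu [gen_m ->]]].
(* Reduce mu modulo e: the multiples e R already lie in <r_0, ..., r_j>. *)
have e_gt0 : 0 < e by apply: ek_gt0; rewrite lt_jr.
have R_gt0 : 0 < R by apply: nth_gt0.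
set m' := m + mu %/ e * (e * R).
have gen_m' : gen (take j.+1 r) m' by apply/gen_add/gen_muln/gen_ek_mul.
have -> : m + mu * R = m' + mu %% e * R by rewrite /m' {1}(divn_eq mu e); nia.
apply/eqP => eq_T.
have digit : mu %% e = b j.+1.
  apply: (@eq_digits_mod (dk r j.+1) R (m' + nth 0 r 0) T) => //.
  - by apply: dvdn_add; [apply: gen_gcd_seq_dvd gen_m' | apply: dk_dvd].
  - rewrite /T big_nat_cond; apply: dvdn_sum => i /andP [/andP [_ lt_i] _].
    by apply/dvdn_mull/dk_dvd => //; apply: ltn_trans lt_jr.
  - by rewrite -ek_dk ?ltn_mod.
  - by rewrite -ek_dk //; apply: b_lt; rewrite /= leqnn.
  - lia.
have b_lt' : forall i, 0 < i <= j -> b i < ek r i.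
  by move=> i /andP [i_gt0 le_ij]; rewrite b_lt // i_gt0 ltnW.
by move/negP: (IH m' (ltnW lt_jr) gen_m' b_lt'); apply; apply/eqP; lia.
Qed.

Lemma digit_sum_lt_conductor c : (forall n, c <= n -> gen r n) ->
  \sum_(1 <= i < size r) (ek r i).-1 * nth 0 r i < c + nth 0 r 0.
Proof.
move=> c_gen; rewrite ltnNge; apply/negP => le_sum.
set S := \sum_(1 <= i < size r) _ in le_sum.
have e_pred_lt : forall i, 0 < i <= (size r).-1 -> (ek r i).-1 < ek r i.
  move=> i /andP [i_gt0 le_i]; rewrite ltn_predL ek_gt0 // i_gt0 /=.
  by rewrite -(prednK size_r_gt0) ltnS.
have := @gen_add_head_neq_digits (size r).-1 (S - nth 0 r 0) (fun i => (ek r i).-1).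
rewrite ltn_predL prednK // take_size => /(_ size_r_gt0 (c_gen _ _) e_pred_lt) /negP.
by apply; [lia | rewrite subnK //; lia].
Qed.

End Telescopic.

Lemma leq_add_dvdn d a b : d %| a -> d %| b -> a < b -> a + d <= b.
Proof.
move=> da db lt_ab; have := dvdn_leq _ (dvdn_sub db da).
by rewrite subn_gt0 => /(_ lt_ab); lia.
Qed.

Lemma leq_add_mul_decr x y A B m m' : B <= A -> m' <= m ->
  x + A * m <= y + B * m -> x + A * m' <= y + B * m'.
Proof.
move=> /subnK <- le_m'm; rewrite !mulnDl.
by have := leq_mul (leqnn (A - B)) le_m'm; lia.
Qed.

Lemma expn2_coef k : 0 < k -> 9 * 2 ^ k <= 5 * 4 ^ k + 1.
Proof.
move=> k_gt0; have X_ge2 : 2 <= 2 ^ k by rewrite -{1}(expn1 2) leq_exp2l.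
by rewrite -[4]/(2 * 2) expnMn; nia.
Qed.

Section PlaneCurveGrowth.

Variables (h : nat) (r d e : nat -> nat).
Hypothesis d1 : d 1 = r 0.
Hypothesis d_split : forall k, 0 < k <= h -> d k = e k * d k.+1.
Hypothesis e_gt1 : forall k, 0 < k <= h -> 1 < e k.
Hypothesis d_dvd : forall k, k <= h -> d k.+1 %| r k.
Hypothesis r0_lt_r1 : r 0 < r 1.
Hypothesis e_mul_lt : forall k, 0 < k < h -> e k * r k < r k.+1.

Lemma d_dvdS k : k < h -> d k.+2 %| r k.
Proof.
move=> lt_kh; apply: dvdn_trans (d_dvd (ltnW lt_kh)).
by rewrite (@d_split k.+1) ?dvdn_mull.
Qed.

Lemma r1_bounds : 1 <= h -> 3 * d 2 <= r 1 /\ r 0 + d 2 <= r 1.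
Proof.
move=> h_gt0; have r0_d2 : r 0 = e 1 * d 2 by rewrite -d1 d_split // h_gt0.
have e1_gt1 : 1 < e 1 by apply: e_gt1; rewrite h_gt0.
have : r 0 + d 2 <= r 1.
  by apply: leq_add_dvdn => //; [rewrite r0_d2 dvdn_mull | apply: d_dvd].
by split=> //; nia.
Qed.

Lemma generator_growth k : 0 < k <= h -> 5 * 4 ^ k * d k.+1 <= 6 * r k + 2 * d k.+1.
Proof.
elim: k => [//|[_ h_gt0 | k IH /andP [_ lt_kh]]].
  by have [? _] := r1_bounds h_gt0; rewrite expn1; lia.
have r_step : e k.+1 * r k.+1 + d k.+3 <= r k.+2.
  apply: leq_add_dvdn; [exact/dvdn_mull/d_dvdS | exact: d_dvd | exact: e_mul_lt].
have e_ge2 : 2 * r k.+1 <= e k.+1 * r k.+1.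
  by rewrite leq_mul2r e_gt1 ?orbT //; lia.
have d_ge2 : 2 * d k.+3 <= d k.+2.
  by rewrite (@d_split k.+2) // leq_mul2r e_gt1 ?orbT.
have A_ge2 : 2 <= 5 * 4 ^ k.+1 by rewrite (leq_trans _ (leq_pmulr 5 (expn_gt0 4 k.+1))).
have := @leq_add_mul_decr 0 _ _ _ _ _ A_ge2 d_ge2 (IH (ltnW lt_kh)).
rewrite [4 ^ k.+2]expnS; lia.
Qed.

Lemma digit_sum_growth k : 0 < k <= h ->
  3 * r 0 + (5 * 4 ^ k + 1) * d k.+1 <=
  3 * \sum_(1 <= i < k.+1) (e i).-1 * r i + 9 * 2 ^ k * d k.+1.
Proof.
elim: k => [//|[_ h_gt0 | k IH /andP [_ lt_kh]]].
  have [_ r01] := r1_bounds h_gt0.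
  have : r 1 <= (e 1).-1 * r 1 by apply: leq_pmull; rewrite ltn_predRL e_gt1 ?h_gt0.
  by rewrite big_nat1 expn1; lia.
have growth := @generator_growth k.+2 lt_kh.
have r_le : r k.+2 <= (e k.+2).-1 * r k.+2.
  by apply: leq_pmull; rewrite ltn_predRL e_gt1.
have d_ge2 : 2 * d k.+3 <= d k.+2.
  by rewrite (@d_split k.+2) // leq_mul2r e_gt1 ?orbT.
have := @leq_add_mul_decr _ _ _ _ _ _ (@expn2_coef k.+1 isT) d_ge2 (IH (ltnW lt_kh)).
rewrite [\sum_(1 <= i < k.+3) _]big_nat_recr //= (expnS 2 k.+1).
by rewrite (expnS 4 k.+1) in growth *; lia.
Qed.

End PlaneCurveGrowth.

Lemma plane_curve_conductor_bound r c : uniq r -> all (fun x => 0 < x) r ->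
  (forall x, x \in r -> ~ gen (rem x r) x) -> plane_curve_gens r ->
  (forall n, c <= n -> gen r n) -> 0 < (size r).-1 ->
  5 * 4 ^ (size r).-1 + 4 <= 3 * c + 9 * 2 ^ (size r).-1.
Proof.
move=> r_uniq r_gt0 r_min [[r_sorted r_free] r_plane] c_gen h_gt0.
set h := (size r).-1 in h_gt0 r_plane *.
have size_r_gt0 : 0 < size r by move: h_gt0; rewrite /h; case: (size r).
have size_r : size r = h.+1 by rewrite /h prednK.
have lt_size k : k <= h -> k < size r by rewrite size_r ltnS.
have lcm_gen := free_lcm_gen r_free r_gt0.
have d_split k : 0 < k <= h -> dk r k = ek r k * dk r k.+1.
  by case/andP=> _ /lt_size /ek_mul_dk ->.
have e_gt1 k : 0 < k <= h -> 1 < ek r k.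
  by case/andP=> k_gt0 /lt_size lt_kr; apply: ek_gt1 => //; rewrite k_gt0.
have d_dvd k : k <= h -> dk r k.+1 %| nth 0 r k by move/lt_size; apply: dk_dvd (ltnSn k).
have r01 : nth 0 r 0 < nth 0 r 1.
  by apply: (sorted_ltn_nth ltn_trans 0 r_sorted); rewrite ?inE ?size_r //; lia.
have e_mul_lt k : 0 < k < h -> ek r k * nth 0 r k < nth 0 r k.+1.
  by case/andP=> k_gt0 lt_kh; apply: r_plane; lia.
have h_range : 0 < h <= h by rewrite h_gt0 leqnn.
have growth := digit_sum_growth (dk1 size_r_gt0) d_split e_gt1 d_dvd r01 e_mul_lt h_range.
have dh_gt0 : 0 < dk r h.+1 by apply: dk_gt0.
have := leq_add_mul_decr (expn2_coef h_gt0) dh_gt0 growth.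
have := digit_sum_lt_conductor r_gt0 size_r_gt0 lcm_gen c_gen.
by rewrite size_r !muln1; lia.
Qed.

Lemma INR_expn m n : INR (m ^ n) = (INR m ^ n)%R.
Proof. by elim: n => [//|n IH]; rewrite expnS mult_INR IH. Qed.

Lemma log2_bound h c : 5 * 4 ^ h + 4 <= 3 * c + 9 * 2 ^ h ->
  (INR h <= ln ((sqrt (INR (60 * c + 1)) + 9) / 10) / ln 2)%R.
Proof.
set X := 2 ^ h; rewrite -[4]/(2 * 2) expnMn -/X => le_c.
have X_gt0 : 0 < X by rewrite expn_gt0.
have sq_le : (10 * X - 9) * (10 * X - 9) <= 60 * c + 1 by nia.
have X_le : (INR X <= (sqrt (INR (60 * c + 1)) + 9) / 10)%R.
  have : (INR (10 * X - 9) <= sqrt (INR (60 * c + 1)))%R.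
    rewrite -(sqrt_square (INR (10 * X - 9))); last exact: pos_INR.
    by rewrite -mult_INR; apply/sqrt_le_1_alt/le_INR/leP.
  rewrite minus_INR ?mult_INR /=; first lra.
  by apply/leP; lia.
have ln2_gt0 : (0 < ln 2)%R by have := ln_lt_2; lra.
have INR_X_gt0 : (0 < INR X)%R by apply/lt_0_INR/ltP.
have : (INR h * ln 2 <= ln ((sqrt (INR (60 * c + 1)) + 9) / 10))%R.
  rewrite -ln_pow; last lra.
  rewrite -[(2 ^ h)%R]/(INR 2 ^ h)%R -INR_expn -/X.
  case/Rle_lt_or_eq_dec: X_le => [lt_X | ->]; last exact: Rle_refl.
  exact/Rlt_le/ln_increasing.
move=> le_ln; apply: (Rmult_le_reg_r (ln 2)) => //.
by rewrite /Rdiv Rmult_assoc Rinv_l ?Rmult_1_r //; lra.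
Qed.

Theorem corollary5p4 (G : nat -> Prop) (r : seq nat) (c : nat) :
  numerical_semigroup G ->
  minimal_generating_system G r ->
  sorted ltn r ->
  plane_curve_gens r ->
  is_conductor G c ->
  2 <= (size r).-1 ->
  (INR (size r).-1 <= ln ((sqrt (INR (60 * c + 1)) + 9) / 10) / ln 2)%R.
Proof.
move=> _ [G_gen r_uniq r_gt0 r_min] _ r_plane [c_le _] h_ge2.
apply: log2_bound; apply: plane_curve_conductor_bound => //; last exact: ltnW.
by move=> n /c_le /G_gen.
Qed.
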